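(* Let $P\in\mathbb{R}^{n\times n}$ be a sub-stochastic matrix, $\gamma\in[0,1)$, $c\in\mathbb{R}^n$ arbitrary, and $v\in\mathbb{R}^n$ the unique solution of $v=c+\gamma Pv$. Let $\pi\in\mathbb{R}^n$ be a sub-stochastic vector and $z\in\mathbb{R}$ a scalar such that $v_k>z+\gamma\pi^Tv$ for some $k\in\{1,\dots,n\}$. Let $\widehat P$ be the matrix obtained from $P$ by replacing its $k$-th row with $\pi^T$, $\widehat c$ the vector obtained from $c$ by replacing its $k$-th entry with $z$, and $\widehat v$ the unique solution of $\widehat v=\widehat c+\gamma\widehat P\widehat v$. Then $$\widehat v_k<c_k+\gamma\sum_{j=1}^nP_{kj}\widehat v_j .$$
   Context: A sub-stochastic matrix is a matrix with nonnegative entries and all row sums at most $1$. A sub-stochastic vector is a nonnegative vector whose entries sum to at most $1$. *)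

From HB Require Import structures.
From mathcomp Require Import all_boot all_order all_algebra.
Set Implicit Arguments. Unset Strict Implicit. Unset Printing Implicit Defensive.
Import Order.TTheory GRing.Theory Num.Theory.
Local Open Scope ring_scope.

Definition substochastic_mx (R : numDomainType) (n : nat) (P : 'M[R]_n) : Prop :=
  (forall i j, 0 <= P i j) /\ (forall i, \sum_(j < n) P i j <= 1).

Definition substochastic_vec (R : numDomainType) (n : nat) (p : 'cV[R]_n) : Prop :=
  (forall i, 0 <= p i 0) /\ \sum_(i < n) p i 0 <= 1.

Definition replace_row (R : Type) (n : nat) (P : 'M[R]_n) (k : 'I_n) (p : 'cV[R]_n)
  : 'M[R]_n := \matrix_(i, j) (if i == k then p j 0 else P i j).

Definition replace_entry (R : Type) (n : nat) (c : 'cV[R]_n) (k : 'I_n) (z : R)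
  : 'cV[R]_n := \col_i (if i == k then z else c i 0).

From HB Require Import structures.
From mathcomp Require Import all_boot all_order all_algebra.
From mathcomp Require Import lra.
Set Implicit Arguments. Unset Strict Implicit. Unset Printing Implicit Defensive.
Import Order.TTheory GRing.Theory Num.Theory.
Local Open Scope ring_scope.

(* A supersolution [u >= a + g Q u] of the discounted equation dominates its
   solution [w]: the largest excess [M] of [w] over [u] satisfies [M <= g M],
   hence [M <= 0].  Applied to [v] for the modified system this gives
   [vh <= v]; if the claim failed, [vh] would be a supersolution of the
   original system, forcing [v = vh], which contradicts the strict
   inequality at [k]. *)

Lemma fixpoint_entry (R : pzRingType) (n : nat) (Q : 'M[R]_n) (g : R)
    (a w : 'cV[R]_n) i :
  w = a + g *: (Q *m w) -> w i 0 = a i 0 + g * (Q *m w) i 0.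
Proof. by move=> w_fix; rewrite {1}w_fix !mxE. Qed.

Section Comparison.

Variables (R : realDomainType) (n : nat) (Q : 'M[R]_n).
Hypothesis Q_substochastic : substochastic_mx Q.

Lemma substochastic_mulmx_le (d : 'cV[R]_n) (M : R) i :
  0 <= M -> (forall j, d j 0 <= M) -> (Q *m d) i 0 <= M.
Proof.
case: Q_substochastic => Q_ge0 Q_sum_le1 M_ge0 d_leM.
rewrite mxE; apply: (@le_trans _ _ (\sum_(j < n) Q i j * M)).
  by apply: ler_sum => j _; apply: ler_wpM2l.
by rewrite -mulr_suml ler_piMl.
Qed.

Lemma discounted_solution_le_supersolution (g : R) (a u w : 'cV[R]_n) :
  0 <= g -> g < 1 ->
  (forall i, a i 0 + g * (Q *m u) i 0 <= u i 0) ->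
  w = a + g *: (Q *m w) ->
  forall i, w i 0 <= u i 0.
Proof.
move=> g_ge0 g_lt1 u_super w_fix.
set d := w - u; set M := \big[Order.max/0]_(j < n) d j 0.
have M_ge0 : 0 <= M by apply: bigmax_ge_id.
have d_leM j : d j 0 <= M by apply: (le_bigmax 0 (fun j => d j 0) j).
have d_le_gM i : d i 0 <= g * M.
  have Qd_leM : (Q *m d) i 0 <= M by apply: substochastic_mulmx_le.
  have Qd_i : (Q *m d) i 0 = (Q *m w) i 0 - (Q *m u) i 0 by rewrite mulmxBr !mxE.
  have d_i : d i 0 = w i 0 - u i 0 by rewrite !mxE.
  have := u_super i; have := ler_wpM2l g_ge0 Qd_leM.
  rewrite Qd_i d_i (fixpoint_entry i w_fix); lra.
have M_le_gM : M <= g * M.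
  by apply: bigmax_le => [|j _]; [apply: mulr_ge0 | apply: d_le_gM].
move=> i; have := d_leM i; rewrite /d !mxE; nra.
Qed.

End Comparison.

Lemma substochastic_replace_row (R : numDomainType) (n : nat) (P : 'M[R]_n)
    (k : 'I_n) (p : 'cV[R]_n) :
  substochastic_mx P -> substochastic_vec p ->
  substochastic_mx (replace_row P k p).
Proof.
case=> P_ge0 P_sum_le1 [p_ge0 p_sum_le1]; split=> [i j|i].
  by rewrite mxE; case: ifP.
under eq_bigr do rewrite mxE.
by case: (i == k).
Qed.

Lemma replace_row_mulmx (R : pzSemiRingType) (n : nat) (P : 'M[R]_n)
    (k : 'I_n) (p u : 'cV[R]_n) i :
  (replace_row P k p *m u) i 0 =
  if i == k then (p^T *m u) 0 0 else (P *m u) i 0.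
Proof.
by rewrite !mxE; case: ifP => ik; apply: eq_bigr => j _; rewrite !mxE ik.
Qed.

Lemma replace_entryE (R : Type) (n : nat) (c : 'cV[R]_n) (k : 'I_n) (z : R) i :
  replace_entry c k z i 0 = if i == k then z else c i 0.
Proof. by rewrite mxE. Qed.

Theorem lemma6 (R : realFieldType) (n : nat) (P : 'M[R]_n) (gamma : R)
  (c v : 'cV[R]_n) (p : 'cV[R]_n) (z : R) (k : 'I_n) (vh : 'cV[R]_n) :
  substochastic_mx P ->
  0 <= gamma -> gamma < 1 ->
  v = c + gamma *: (P *m v) ->
  substochastic_vec p ->
  z + gamma * (p^T *m v) 0 0 < v k 0 ->
  vh = replace_entry c k z + gamma *: (replace_row P k p *m vh) ->
  vh k 0 < c k 0 + gamma * \sum_(j < n) P k j * vh j 0.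
Proof.
move=> P_sub g_ge0 g_lt1 v_fix p_sub v_k vh_fix.
have Ph_sub : substochastic_mx (replace_row P k p)
  by exact: substochastic_replace_row.
have vh_le_v : forall i, vh i 0 <= v i 0.
  apply: (discounted_solution_le_supersolution Ph_sub g_ge0 g_lt1 _ vh_fix) => i.
  rewrite replace_row_mulmx replace_entryE; case: eqP => [->|_]; first exact: ltW.
  by rewrite (fixpoint_entry i v_fix).
have -> : \sum_(j < n) P k j * vh j 0 = (P *m vh) k 0 by rewrite mxE.
rewrite ltNge; apply/negP => vh_super_k.
have v_le_vh : forall i, v i 0 <= vh i 0.
  apply: (discounted_solution_le_supersolution P_sub g_ge0 g_lt1 _ v_fix) => i.
  have [->|ik] := eqVneq i k; first exact: vh_super_k.
  by rewrite (fixpoint_entry i vh_fix) replace_row_mulmx replace_entryE (negbTE ik).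
have vhE : vh = v by apply/matrixP => i j; rewrite ord1; apply/le_anti/andP.
move: v_k; rewrite -vhE (fixpoint_entry k vh_fix).
by rewrite replace_row_mulmx replace_entryE eqxx ltxx.
Qed.
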